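(* Let $X$ be a Banach space, $\mathbb F\subseteq\mathbb D$ finite, and $(h,i)\in\mathbb F$ an $\mathbb F$-admissible index. If $f_{\mathbb F}=\sum_{(k,j)\in\mathbb F}x_k^{(j)}\chi_k^{(j)}$ with $x_k^{(j)}\in X$, then there exist elements $y_k^{(j)}\in X$, $(k,j)\in\Phi_h^{(i)}(\mathbb F)$, such that $$f_{\mathbb F}\circ\phi_h^{(i)}=\sum_{(k,j)\in\Phi_h^{(i)}(\mathbb F)}y_k^{(j)}\chi_k^{(j)}\quad\text{and}\quad\sum_{(k,j)\in\mathbb F}\|x_k^{(j)}\|^2=\sum_{(k,j)\in\Phi_h^{(i)}(\mathbb F)}\|y_k^{(j)}\|^2.$$
   Context: Dyadic intervals: $\Delta_k^{(j)}:=[\frac{j-1}{2^k},\frac{j}{2^k})$ for $k\ge0$. Haar functions: for $k\ge1$, integer $j$, $\chi_k^{(j)}(t)=+2^{(k-1)/2}$ on $\Delta_k^{(2j-1)}$, $-2^{(k-1)/2}$ on $\Delta_k^{(2j)}$, $0$ otherwise, $t\in[0,1)$. Dyadic tree $\mathbb D:=\{(k,j):k\ge1;\ j=1,\dots,2^{k-1}\}$. For $(h,i)\in\mathbb D$, $\phi_h^{(i)}:[0,1)\to[0,1)$ is $t\mapsto t+2^{-(h+1)}$ on $\Delta_{h+1}^{(4i-2)}$, $t\mapsto t-2^{-(h+1)}$ on $\Delta_{h+1}^{(4i-1)}$, identity otherwise. An index $(h,i)\in\mathbb F$ is $\mathbb F$-admissible if neither $(h+1,2i-1)$ nor $(h+1,2i)$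 belongs to $\mathbb F$. Fork: $\mathbb F_h^{(i)}:=\{(h,i),(h+1,2i-1),(h+1,2i)\}$. For $(k,j)\in\mathbb D$ define $j^\ast$: $j^\ast=j+2^{k-h-2}$ if $\Delta_{k-1}^{(j)}\subseteq\Delta_{h+1}^{(4i-2)}$; $j^\ast=j-2^{k-h-2}$ if $\Delta_{k-1}^{(j)}\subseteq\Delta_{h+1}^{(4i-1)}$; $j^\ast=j$ otherwise (so that $\chi_k^{(j)}\circ\phi_h^{(i)}=\chi_k^{(j^\ast)}$ for $(k,j)\notin\mathbb F_h^{(i)}$). Then $\Phi_h^{(i)}(\mathbb F):=\{(h+1,2i-1),(h+1,2i)\}\cup\{(k,j^\ast):(k,j)\in\mathbb F\setminus\mathbb F_h^{(i)}\}$. *)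

From mathcomp Require Import all_boot all_order all_algebra.
From mathcomp Require Import all_classical all_reals all_analysis.
Set Implicit Arguments. Unset Strict Implicit. Unset Printing Implicit Defensive.
Import Order.TTheory GRing.Theory Num.Theory.
Import numFieldNormedType.Exports.
Local Open Scope classical_set_scope.
Local Open Scope ring_scope.

Section Haar.
Variable R : realType.

Definition dyint (k j : nat) : set R :=
  [set t | (j%:R - 1) / 2 ^+ k <= t /\ t < j%:R / 2 ^+ k].

(* Haar function chi_k^{(j)} (used for k >= 1, j >= 1) *)
Definition haar (k j : nat) (t : R) : R :=
  if `[< dyint k (2 * j - 1)%N t >] then Num.sqrt (2 ^+ (k - 1)%N)
  else if `[< dyint k (2 * j)%N t >] then - Num.sqrt (2 ^+ (k - 1)%N)
  else 0.

Definition phi (h i : nat) (t : R) : R :=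
  if `[< dyint (h + 1)%N (4 * i - 2)%N t >] then t + (2 ^+ (h + 1)%N)^-1
  else if `[< dyint (h + 1)%N (4 * i - 1)%N t >] then t - (2 ^+ (h + 1)%N)^-1
  else t.

Definition jstar (h i k j : nat) : nat :=
  if `[< dyint (k - 1)%N j `<=` dyint (h + 1)%N (4 * i - 2)%N >] then (j + 2 ^ (k - h - 2))%N
  else if `[< dyint (k - 1)%N j `<=` dyint (h + 1)%N (4 * i - 1)%N >] then (j - 2 ^ (k - h - 2))%N
  else j.

End Haar.

Definition inD (p : nat * nat) : Prop :=
  (1 <= p.1)%N /\ (1 <= p.2)%N /\ (p.2 <= 2 ^ (p.1 - 1))%N.

Definition fork (h i : nat) : seq (nat * nat) :=
  [:: (h, i); (h + 1, 2 * i - 1)%N; (h + 1, 2 * i)%N].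

Definition admissible (F : seq (nat * nat)) (h i : nat) : Prop :=
  (h + 1, 2 * i - 1)%N \notin F /\ (h + 1, 2 * i)%N \notin F.

(* Phi_h^{(i)}(F), as a duplicate-free list representing the finite set *)
Definition Phi (R : realType) (h i : nat) (F : seq (nat * nat)) : seq (nat * nat) :=
  undup ([:: (h + 1, 2 * i - 1)%N; (h + 1, 2 * i)%N] ++
         [seq (p.1, @jstar R h i p.1 p.2) | p <- F & p \notin fork h i]).

From mathcomp Require Import all_boot all_order all_algebra.
From mathcomp Require Import all_classical all_reals all_analysis.
From mathcomp Require Import zify.
Set Implicit Arguments. Unset Strict Implicit. Unset Printing Implicit Defensive.
Import Order.TTheory GRing.Theory Num.Theory.
Import numFieldNormedType.Exports.
Local Open Scope ring_scope.

(* Once N is large, every dyadic interval involved is a union of dyadic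
   intervals of length 2^-N, so whether t lies in one depends only on the
   integer floor (t 2^N), on which phi_h^(i) acts by swapping two adjacent
   blocks of length 2^(N-h-1). All pointwise identities between the Haar
   functions thus reduce to linear integer arithmetic. Off the fork, chi_k^(j)
   o phi is the Haar function of index j^* on the same level, where j |-> j^*
   is an involution whose image avoids the two children of (h,i) because (h,i)
   is admissible; on the fork, chi_h^(i) o phi = (chi_(h+1)^(2i-1) +
   chi_(h+1)^(2i)) / sqrt 2. Hence x_h^(i) is split into two copies of x_h^(i)
   / sqrt 2 and every other coefficient is merely reindexed, which preserves
   the sum of squared norms. *)

Definition dyblock (e : nat) (m n : int) : bool :=
  ((m - 1) * (2 ^ e)%N%:Z <= n) && (n < m * (2 ^ e)%N%:Z).

Definition haar_sign (e : nat) (j n : int) : int :=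
  if dyblock e (2 * j - 1) n then 1 else if dyblock e (2 * j) n then -1 else 0.

Definition phi_floor (e : nat) (i n : int) : int :=
  if dyblock e (4 * i - 2) n then n + (2 ^ e)%N%:Z
  else if dyblock e (4 * i - 1) n then n - (2 ^ e)%N%:Z
  else n.

Lemma dyblock0_subset (e : nat) (j m : int) :
  (forall n, dyblock 0 j n -> dyblock e m n) <-> dyblock e m (j - 1).
Proof.
rewrite /dyblock expn0; split=> [|H n Hn]; first by apply; lia.
by have -> : n = j - 1 by lia.
Qed.

Section Discretization.
Variable R : realType.

Lemma pow2_gt0 (n : nat) : 0 < (2 : R) ^+ n.
Proof. exact: exprn_gt0. Qed.

Lemma intr_expn2 (e : nat) : ((2 ^ e)%N%:Z)%:~R = (2 : R) ^+ e.
Proof. by rewrite -pmulrn natrX. Qed.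

Lemma dyint_floorE (N k m : nat) (t : R) : (k <= N)%N ->
  dyint k m t <-> dyblock (N - k) m%:Z (Num.floor (t * 2 ^+ N)).
Proof.
move=> kN; have P := pow2_gt0 k; have Q := pow2_gt0 (N - k).
have -> : (2 : R) ^+ N = 2 ^+ k * 2 ^+ (N - k) by rewrite -exprD subnKC.
rewrite /dyint /dyblock Num.Theory.floor_ge_int Num.Theory.floor_lt_int.
rewrite !rmorphM rmorphB /= intr_expn2.
rewrite mulrA -pmulrn ler_pdivrMr // ltr_pdivlMr // -(ler_pM2r Q) -(ltr_pM2r Q).
by split=> [[-> ->]|/andP[-> ->]].
Qed.

Lemma dyint_subsetE (N k1 k2 m1 m2 : nat) : (k1 <= N)%N -> (k2 <= N)%N ->
  (dyint k1 m1 `<=` (dyint k2 m2 : set R))%classic <->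
  (forall n, dyblock (N - k1) m1%:Z n -> dyblock (N - k2) m2%:Z n).
Proof.
move=> k1N k2N; split=> [S n|S t /(dyint_floorE _ _ k1N) /S /(dyint_floorE _ _ k2N) //].
have fl : Num.floor ((n%:~R / 2 ^+ N : R) * 2 ^+ N) = n.
  by rewrite divfK ?gt_eqF ?pow2_gt0 // Num.Theory.intrKfloor.
by rewrite -fl => /(dyint_floorE _ _ k1N) /S /(dyint_floorE _ _ k2N).
Qed.

Lemma haar_floorE (N k j : nat) (t : R) : (k <= N)%N -> (0 < j)%N ->
  haar k j t =
  Num.sqrt (2 ^+ (k - 1)) * (haar_sign (N - k) j%:Z (Num.floor (t * 2 ^+ N)))%:~R.
Proof.
move=> kN j0; rewrite /haar /haar_sign.
rewrite !(asbool_equiv_eqP idP (dyint_floorE _ _ kN)).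
have -> : (2 * j - 1)%N%:Z = 2 * j%:Z - 1 by lia.
have -> : (2 * j)%N%:Z = 2 * j%:Z by lia.
by case: ifP => _; [rewrite mulr1 | case: ifP => _; rewrite ?mulrN1 ?mulr0].
Qed.

Lemma floor_phiE (N h i : nat) (t : R) : (h < N)%N -> (0 < i)%N ->
  Num.floor (phi h i t * 2 ^+ N) = phi_floor (N - h - 1) i%:Z (Num.floor (t * 2 ^+ N)).
Proof.
move=> hN i0; have hN' : (h + 1 <= N)%N by rewrite addn1.
rewrite /phi /phi_floor !(asbool_equiv_eqP idP (dyint_floorE _ _ hN')) subnDA.
have -> : (4 * i - 2)%N%:Z = 4 * i%:Z - 2 by lia.
have -> : (4 * i - 1)%N%:Z = 4 * i%:Z - 1 by lia.
have shift : (2 ^+ (h + 1))^-1 * 2 ^+ N = ((2 ^ (N - h - 1))%N%:Z)%:~R :> R.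
  have -> : (2 : R) ^+ N = 2 ^+ (h + 1) * 2 ^+ (N - h - 1).
    by rewrite -subnDA -exprD subnKC.
  by rewrite intr_expn2 mulKf // gt_eqF // pow2_gt0.
have floorD z : Num.floor (t * 2 ^+ N + z%:~R) = Num.floor (t * 2 ^+ N) + z.
  by rewrite Num.Theory.floorDrz ?intr_int // Num.Theory.intrKfloor.
case: ifP => _; first by rewrite mulrDl shift floorD.
by case: ifP => _ //; rewrite mulrBl shift -rmorphN floorD.
Qed.

End Discretization.

Section HaarRearrangement.
Variable R : realType.

Lemma dyint_subset_leq (k1 k2 m1 m2 : nat) :
  (dyint k1 m1 `<=` (dyint k2 m2 : set R))%classic -> (k2 <= k1)%N.
Proof.
case: leqP => // k12 /(dyint_subsetE _ _ _ (ltnW k12) (leqnn k2)).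
rewrite subnn /dyblock expn0.
have [e ->] : exists e, (k2 - k1 = e.+1)%N by exists (k2 - k1).-1; lia.
have e0 : (0 < 2 ^ e)%N by rewrite expn_gt0.
rewrite expnS; move: (2 ^ e)%N e0 => a a0 S.
have := S ((m1%:Z - 1) * (2 * a)%N%:Z); have := S ((m1%:Z - 1) * (2 * a)%N%:Z + 1).
lia.
Qed.

Lemma dyint_subset_dyblock (k k' j m : nat) : (k' <= k)%N ->
  (dyint k j `<=` (dyint k' m : set R))%classic <-> dyblock (k - k') m%:Z (j%:Z - 1).
Proof.
move=> k'k; rewrite (dyint_subsetE _ _ _ (leqnn k) k'k) subnn.
exact: dyblock0_subset.
Qed.

Lemma jstar_shallow (h i k j : nat) : (k <= h + 1)%N -> @jstar R h i k j = j.
Proof.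
move=> kh; have coarse m : ~ (dyint (k - 1) j `<=` (dyint (h + 1) m : set R))%classic.
  by move/dyint_subset_leq; lia.
by rewrite /jstar !asboolF.
Qed.

Lemma jstar_deep (h i k j : nat) : (h + 2 <= k)%N ->
  @jstar R h i k j =
  if dyblock (k - h - 2) (4 * i - 2)%N%:Z (j%:Z - 1) then (j + 2 ^ (k - h - 2))%N
  else if dyblock (k - h - 2) (4 * i - 1)%N%:Z (j%:Z - 1) then (j - 2 ^ (k - h - 2))%N
  else j.
Proof.
move=> hk; have hk' : (h + 1 <= k - 1)%N by lia.
rewrite /jstar !(asbool_equiv_eqP idP (dyint_subset_dyblock _ _ hk')).
by have -> : (k - 1 - (h + 1) = k - h - 2)%N by lia.
Qed.

Lemma jstarK (h i k j : nat) : (0 < i)%N -> (0 < k)%N ->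
  @jstar R h i k (@jstar R h i k j) = j.
Proof.
move=> i0 k0; case: (leqP (h + 2) k) => hk; last by rewrite !jstar_shallow //; lia.
rewrite !jstar_deep // /dyblock; move: (2 ^ (k - h - 2))%N => a.
have ia : (a <= i * a)%N by rewrite leq_pmull.
by repeat case: ifP; lia.
Qed.

Lemma haar_phi_deep (h i k j : nat) (t : R) : (0 < i)%N -> (0 < j)%N ->
  (h + 2 <= k)%N -> haar k j (phi h i t) = haar k (@jstar R h i k j) t.
Proof.
move=> i0 j0 hk; have hk' : (h < k)%N by lia.
have a0 : (0 < 2 ^ (k - h - 2))%N by rewrite expn_gt0.
have ia : (2 ^ (k - h - 2) <= i * 2 ^ (k - h - 2))%N by rewrite leq_pmull.
have jstar0 : (0 < @jstar R h i k j)%N.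
  by rewrite jstar_deep // /dyblock; repeat case: ifP; lia.
rewrite (haar_floorE _ (leqnn k) j0) (haar_floorE _ (leqnn k) jstar0).
rewrite (floor_phiE _ hk' i0); congr (_ * _%:~R); move: (Num.floor _) => n.
have -> : (k - h - 1 = (k - h - 2).+1)%N by lia.
rewrite jstar_deep // /haar_sign /phi_floor /dyblock subnn expn0 expnS.
move: (2 ^ (k - h - 2))%N a0 ia => a a0 ia.
by repeat case: ifP; lia.
Qed.

Lemma haar_phi_shallow (h i k j : nat) (t : R) : (0 < i)%N -> (0 < j)%N ->
  (k <= h + 1)%N -> (k, j) \notin fork h i -> haar k j (phi h i t) = haar k j t.
Proof.
move=> i0 j0 kh; rewrite !inE !xpair_eqE => notfork.
have hh : (h < h + 1)%N by rewrite addn1.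
rewrite (haar_floorE _ kh j0) [RHS](haar_floorE _ kh j0) (floor_phiE _ hh i0).
congr (_ * _%:~R); move: (Num.floor _) => n.
have -> : (h + 1 - h - 1 = 0)%N by lia.
rewrite /haar_sign /phi_floor /dyblock expn0.
case: (ltngtP k h) notfork => [kh'|hk|->] notfork.
- have -> : (h + 1 - k = (h - 1 - k).+2)%N by lia.
  rewrite !expnS; move: (2 ^ (h - 1 - k))%N => a.
  by repeat case: ifP; lia.
- have -> : (h + 1 - k = 0)%N by lia.
  by rewrite expn0; repeat case: ifP; lia.
- have -> : (h + 1 - h = 1)%N by lia.
  by rewrite expn1; repeat case: ifP; lia.
Qed.

Lemma haar_phi_jstar (h i k j : nat) (t : R) : (0 < i)%N -> (0 < j)%N ->
  (k, j) \notin fork h i -> haar k j (phi h i t) = haar k (@jstar R h i k j) t.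
Proof.
move=> i0 j0 notfork; case: (leqP (h + 2) k) => hk; first exact: haar_phi_deep.
by rewrite jstar_shallow ?haar_phi_shallow //; lia.
Qed.

Lemma haar_phi_fork (h i : nat) (t : R) : (0 < h)%N -> (0 < i)%N ->
  haar h i (phi h i t) =
  (Num.sqrt 2)^-1 * (haar (h + 1) (2 * i - 1) t + haar (h + 1) (2 * i) t).
Proof.
move=> h0 i0; have hh : (h < h + 1)%N by rewrite addn1.
have i1 : (0 < 2 * i - 1)%N by lia.
have i2 : (0 < 2 * i)%N by lia.
rewrite (haar_floorE _ (ltnW hh) i0) (haar_floorE _ (leqnn _) i1).
rewrite (haar_floorE _ (leqnn _) i2).
rewrite (floor_phiE _ hh i0); move: (Num.floor _) => n.
have -> : haar_sign (h + 1 - h) i (phi_floor (h + 1 - h - 1) i n) =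
    haar_sign (h + 1 - (h + 1)) (2 * i - 1)%N n + haar_sign (h + 1 - (h + 1)) (2 * i)%N n.
  have -> : (h + 1 - h = 1)%N by lia.
  rewrite /haar_sign /phi_floor /dyblock subnn subnn expn0 expn1.
  by repeat case: ifP; lia.
have -> : (h + 1 - 1 = (h - 1).+1)%N by lia.
by rewrite exprS sqrtrM ?ler0n // rmorphD /= -mulrDr -mulrA mulKf.
Qed.

End HaarRearrangement.

Lemma sqr_norm_scale_invsqrt2 (R : rcfType) (V : normedModType R) (v : V) :
  `|(Num.sqrt 2)^-1 *: v| ^+ 2 + `|(Num.sqrt 2)^-1 *: v| ^+ 2 = `|v| ^+ 2.
Proof.
rewrite normrZ exprMn normfV ger0_norm ?sqrtr_ge0 // exprVn sqr_sqrtr ?ler0n //.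
by rewrite mulrC -splitr.
Qed.

Definition fork_children (h i : nat) : seq (nat * nat) :=
  [:: (h + 1, 2 * i - 1)%N; (h + 1, 2 * i)%N].

Section ForkRearrangement.
Variables (R : realType) (X : normedModType R) (h i : nat) (F : seq (nat * nat)).
Hypotheses (uniqF : uniq F) (F_in_D : forall p, p \in F -> inD p).
Hypotheses (hiF : (h, i) \in F) (admF : admissible F h i).

Definition rearrange (p : nat * nat) : nat * nat := (p.1, @jstar R h i p.1 p.2).

Definition rearranged_coef (x : nat * nat -> X) (q : nat * nat) : X :=
  if q \in fork_children h i then (Num.sqrt 2)^-1 *: x (h, i) else x (rearrange q).

Let G := [seq p <- F | p \notin fork h i].

Let h_gt0 : (0 < h)%N. Proof. by have [] := F_in_D hiF. Qed.
Let i_gt0 : (0 < i)%N. Proof. by have [_ []] := F_in_D hiF. Qed.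

Let children_notin_F q : q \in fork_children h i -> q \notin F.
Proof. by case: admF => ? ?; rewrite !inE => /orP[] /eqP ->. Qed.

Lemma rearrangeK_in : {in G, involutive rearrange}.
Proof.
move=> [k j]; rewrite mem_filter => /andP[_ /F_in_D [k0 _]].
by rewrite /rearrange /= jstarK.
Qed.

Lemma rearrange_notin_children p : p \in G -> rearrange p \notin fork_children h i.
Proof.
case: p => k j; rewrite mem_filter => /andP[_ kjF]; have [/= k0 _] := F_in_D kjF.
rewrite /rearrange /=; case: (leqP (h + 2) k) => hk.
  by rewrite !inE !xpair_eqE; lia.
rewrite jstar_shallow; last by lia.
by apply: contraL kjF; apply: children_notin_F.
Qed.

Lemma Phi_fork_split : Phi R h i F = fork_children h i ++ map rearrange G.
Proof.
apply: undup_id; rewrite cat_uniq; apply/and3P; split.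
- by rewrite /= inE xpair_eqE andbT; lia.
- by apply/hasPn => _ /mapP[p pG ->]; apply: rearrange_notin_children.
- by rewrite map_inj_in_uniq ?filter_uniq //; apply: can_in_inj rearrangeK_in.
Qed.

Lemma big_fork_split (V : nmodType) (f : nat * nat -> V) :
  \sum_(p <- F) f p = f (h, i) + \sum_(p <- G) f p.
Proof.
rewrite (bigD1_seq _ hiF uniqF) big_filter; congr (_ + _).
rewrite big_seq_cond [RHS]big_seq_cond; apply: eq_bigl => p.
case: (boolP (p \in F)) => //= pF.
have : p \notin fork_children h i by apply: contraL pF => /children_notin_F.
by rewrite /fork !inE => /norP[/negbTE -> /negbTE ->]; rewrite !orbF.
Qed.

Lemma big_Phi (V : nmodType) (f : nat * nat -> V) :
  \sum_(q <- Phi R h i F) f q =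
  f (h + 1, 2 * i - 1)%N + f (h + 1, 2 * i)%N + \sum_(p <- G) f (rearrange p).
Proof.
by rewrite Phi_fork_split big_cat big_map /fork_children !big_cons big_nil /= addr0.
Qed.

Variable x : nat * nat -> X.

Lemma rearranged_coef_rearrange p : p \in G -> rearranged_coef x (rearrange p) = x p.
Proof.
move=> pG; rewrite /rearranged_coef (negbTE (rearrange_notin_children pG)).
by rewrite rearrangeK_in.
Qed.

Lemma rearranged_coef_child q : q \in fork_children h i ->
  rearranged_coef x q = (Num.sqrt 2)^-1 *: x (h, i).
Proof. by rewrite /rearranged_coef => ->. Qed.

Lemma haar_expansion_phi (t : R) :
  \sum_(p <- F) haar p.1 p.2 (phi h i t) *: x p =
  \sum_(q <- Phi R h i F) haar q.1 q.2 t *: rearranged_coef x q.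
Proof.
rewrite big_Phi big_fork_split !rearranged_coef_child ?inE ?eqxx ?orbT //=.
rewrite haar_phi_fork //; congr (_ + _).
  by rewrite !scalerA -scalerDl mulrC mulrDl.
apply: eq_big_seq => -[k j] pG; rewrite rearranged_coef_rearrange //.
move: pG; rewrite mem_filter => /andP[notfork /F_in_D [_ [/= j0 _]]].
by rewrite haar_phi_jstar.
Qed.

Lemma sqr_norm_rearranged_coef :
  \sum_(p <- F) `|x p| ^+ 2 = \sum_(q <- Phi R h i F) `|rearranged_coef x q| ^+ 2.
Proof.
rewrite big_Phi big_fork_split !rearranged_coef_child ?inE ?eqxx ?orbT //.
rewrite sqr_norm_scale_invsqrt2; congr (_ + _).
by apply: eq_big_seq => p pG; rewrite rearranged_coef_rearrange.
Qed.

End ForkRearrangement.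

Theorem lemma3p7 (R : realType) (X : completeNormedModType R)
    (F : seq (nat * nat)) (h i : nat) (x : nat * nat -> X) :
  uniq F -> (forall p, p \in F -> inD p) ->
  (h, i) \in F -> admissible F h i ->
  exists y : nat * nat -> X,
    (forall t : R, 0 <= t < 1 ->
       \sum_(p <- F) haar p.1 p.2 (phi h i t) *: x p =
       \sum_(p <- Phi R h i F) haar p.1 p.2 t *: y p) /\
    \sum_(p <- F) `|x p| ^+ 2 = \sum_(p <- Phi R h i F) `|y p| ^+ 2.
Proof.
move=> uniqF F_in_D hiF admF; exists (rearranged_coef h i x); split.
  by move=> t _; apply: haar_expansion_phi.
exact: sqr_norm_rearranged_coef.
Qed.
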